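(* Under the parameter assumptions in the context, the reduced system $\dot x=G(x)$ is strongly monotone on the open orthant $(0,\infty)^4$ with respect to the partial order induced by the orthant cone $C_\sigma=\{x\in\mathbb{R}^4:\sigma_ix_i\ge0\ \forall i\}$ with $\sigma=(-1,1,-1,1)$; that is, for all $t>0$ and all $x_1,x_2\in(0,\infty)^4$ with $x_1-x_2\in C_\sigma$ and $x_1\ne x_2$, one has $\phi_t(x_1)-\phi_t(x_2)\in \mathrm{int}(C_\sigma)$, where $\phi_t$ is the flow of the reduced system.
   Context: All of the following are positive real parameters: $A_s, A_z, E_{34}, E_{200}, E_S, E_Z, \beta_{34}, \beta_{-34}, \beta_{200}, \beta_{-200}, \gamma_s, \gamma_z, c_s, c_{-s}, c_z, c_{-z}, \beta_s, \beta_{s1}, \beta_{s2}, \beta_z, \beta_{z1}, \beta_{z2}, k_s, k_{s1}, k_{s2}, k_{-s}, k_z, k_{z1}, k_{z2}, k_{-z}, \delta_z$. They satisfy $\beta_s<\beta_{s1}<\beta_{s2}$, $\beta_z<\beta_{z1}<\beta_{z2}$, $k_s>k_{s1}>k_{s2}$ and $k_z>k_{z1}>k_{z2}$. For $\rho\in\{s,z\}$ define $e_{\rho1}=\beta_{\rho1}\beta_{\rho2}+(\beta_{\rho1}+\beta_{\rho2})c_{-\rho}+c_{-\rho}^2$, $e_{\rho2}=c_\rho(\beta_{\rho2}+c_{-\rho})$, $e_{\rho3}=\beta_\rho\beta_{\rho2}+\beta_{\rho1}\beta_{\rho2}+\beta_{\rho1}c_{-\rho}$, $\Delta_\rho(\mu)=\beta_{\rho2}c_\rho^2\mu^2+e_{\rho3}c_\rho\mu+e_{\rho1}\beta_\rho$,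 and $N_\rho(\mu)=\dfrac{k_\rho(\beta_{\rho2}c_\rho\mu+e_{\rho1})+k_{\rho1}e_{\rho2}\mu+k_{\rho2}c_\rho^2\mu^2}{\Delta_\rho(\mu)}$ for $\mu\ge 0$. The reduced system $\dot x=G(x)$, $x=(\mu_{34},s,\mu_{200},z)$, is $\dot\mu_{34}=\dfrac{\beta_{34}E_{34}A_sA_z}{(s^2+A_s)(z^2+A_z)}-\beta_{-34}\mu_{34}$, $\dot s=\dfrac{\gamma_sE_SA_s}{s^2+A_s}N_s(\mu_{34})-k_{-s}s$, $\dot\mu_{200}=\dfrac{\beta_{200}E_{200}A_sA_z}{(s^2+A_s)(z^2+A_z)}-\beta_{-200}\mu_{200}$, $\dot z=\delta_z+\dfrac{\gamma_zE_Zs^2z^2}{(s^2+A_s)(z^2+A_z)}N_z(\mu_{200})-k_{-z}z$. *)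

From Stdlib Require Import Reals Lra.
Open Scope R_scope.

Record params := mkParams {
  A_s : R; A_z : R; E_34 : R; E_200 : R; E_S : R; E_Z : R;
  b_34 : R; b_m34 : R; b_200 : R; b_m200 : R;
  g_s : R; g_z : R; c_s : R; c_ms : R; c_z : R; c_mz : R;
  b_s : R; b_s1 : R; b_s2 : R; b_z : R; b_z1 : R; b_z2 : R;
  k_s : R; k_s1 : R; k_s2 : R; k_ms : R;
  k_z : R; k_z1 : R; k_z2 : R; k_mz : R; d_z : R }.

Definition valid_params (p : params) : Prop :=
  0 < A_s p /\ 0 < A_z p /\ 0 < E_34 p /\ 0 < E_200 p /\ 0 < E_S p /\ 0 < E_Z p /\
  0 < b_34 p /\ 0 < b_m34 p /\ 0 < b_200 p /\ 0 < b_m200 p /\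
  0 < g_s p /\ 0 < g_z p /\ 0 < c_s p /\ 0 < c_ms p /\ 0 < c_z p /\ 0 < c_mz p /\
  0 < b_s p /\ 0 < b_s1 p /\ 0 < b_s2 p /\ 0 < b_z p /\ 0 < b_z1 p /\ 0 < b_z2 p /\
  0 < k_s p /\ 0 < k_s1 p /\ 0 < k_s2 p /\ 0 < k_ms p /\
  0 < k_z p /\ 0 < k_z1 p /\ 0 < k_z2 p /\ 0 < k_mz p /\ 0 < d_z p /\
  b_s p < b_s1 p < b_s2 p /\ b_z p < b_z1 p < b_z2 p /\
  k_s1 p < k_s p /\ k_s2 p < k_s1 p /\ k_z1 p < k_z p /\ k_z2 p < k_z1 p.

(* Generic N_rho built from the rho-specific constants
   (beta, beta1, beta2, c, c_minus, k, k1, k2). *)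
Definition e1 (bt bt1 bt2 c cm : R) : R := bt1 * bt2 + (bt1 + bt2) * cm + cm ^ 2.
Definition e2 (bt bt1 bt2 c cm : R) : R := c * (bt2 + cm).
Definition e3 (bt bt1 bt2 c cm : R) : R := bt * bt2 + bt1 * bt2 + bt1 * cm.
Definition Delta (bt bt1 bt2 c cm mu : R) : R :=
  bt2 * c ^ 2 * mu ^ 2 + e3 bt bt1 bt2 c cm * c * mu + e1 bt bt1 bt2 c cm * bt.
Definition Nfun (bt bt1 bt2 c cm k k1 k2 mu : R) : R :=
  (k * (bt2 * c * mu + e1 bt bt1 bt2 c cm) + k1 * e2 bt bt1 bt2 c cm * mu
   + k2 * c ^ 2 * mu ^ 2) / Delta bt bt1 bt2 c cm mu.

Definition N_s (p : params) (mu : R) : R :=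
  Nfun (b_s p) (b_s1 p) (b_s2 p) (c_s p) (c_ms p) (k_s p) (k_s1 p) (k_s2 p) mu.
Definition N_z (p : params) (mu : R) : R :=
  Nfun (b_z p) (b_z1 p) (b_z2 p) (c_z p) (c_mz p) (k_z p) (k_z1 p) (k_z2 p) mu.

Definition G_mu34 (p : params) (m34 s m200 z : R) : R :=
  b_34 p * E_34 p * A_s p * A_z p / ((s ^ 2 + A_s p) * (z ^ 2 + A_z p)) - b_m34 p * m34.
Definition G_s (p : params) (m34 s m200 z : R) : R :=
  g_s p * E_S p * A_s p / (s ^ 2 + A_s p) * N_s p m34 - k_ms p * s.
Definition G_mu200 (p : params) (m34 s m200 z : R) : R :=
  b_200 p * E_200 p * A_s p * A_z p / ((s ^ 2 + A_s p) * (z ^ 2 + A_z p)) - b_m200 p * m200.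
Definition G_z (p : params) (m34 s m200 z : R) : R :=
  d_z p + g_z p * E_Z p * s ^ 2 * z ^ 2 / ((s ^ 2 + A_s p) * (z ^ 2 + A_z p)) * N_z p m200
  - k_mz p * z.

Definition right_cont (f : R -> R) (a : R) : Prop :=
  forall eps, 0 < eps -> exists delta, 0 < delta /\
    forall t, a <= t < a + delta -> Rabs (f t - f a) < eps.

Definition is_solution (p : params) (T : R) (m34 s m200 z : R -> R) : Prop :=
  right_cont m34 0 /\ right_cont s 0 /\ right_cont m200 0 /\ right_cont z 0 /\
  forall t, 0 < t < T ->
    derivable_pt_lim m34 t (G_mu34 p (m34 t) (s t) (m200 t) (z t)) /\
    derivable_pt_lim s t (G_s p (m34 t) (s t) (m200 t) (z t)) /\
    derivable_pt_lim m200 t (G_mu200 p (m34 t) (s t) (m200 t) (z t)) /\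
    derivable_pt_lim z t (G_z p (m34 t) (s t) (m200 t) (z t)).

Definition in_open_orthant (a b c d : R) : Prop := 0 < a /\ 0 < b /\ 0 < c /\ 0 < d.

Definition in_Csigma (a b c d : R) : Prop := 0 <= - a /\ 0 <= b /\ 0 <= - c /\ 0 <= d.
Definition in_int_Csigma (a b c d : R) : Prop := 0 < - a /\ 0 < b /\ 0 < - c /\ 0 < d.

From Pilot Require Import Defs.
From Stdlib Require Import Reals Lra Psatz.
Open Scope R_scope.

(* Idea: the open orthant is forward invariant, and along two solutions there the
   sigma-transformed difference u = (x2a - x1a, x1b - x2b, x2c - x1c, x1d - x2d) solves a linear
   system u' = A(t) u whose entries are difference quotients of G.  The Hill factors and N_s, N_z
   are strictly decreasing on (0,oo) with bounded slopes, so A(t) is a Metzler matrix with uniformly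
   bounded entries, strictly positive along the cycle mu34 -> s -> mu200 -> z -> mu34.
   The Lyapunov function W = sum_i min(u_i, 0)^2 satisfies W' <= K W and W(0) = 0, so u stays in
   the cone; then each exp(L t) u_i(t) is nondecreasing, and strictly increasing once its
   predecessor on the cycle is positive, so a component positive at time 0 makes all components
   positive at every t > 0. *)

(** * Comparison principles *)

Section ExpWeighted.
Variables (f df : R -> R) (L a b : R).
Hypothesis f_deriv : forall t, a < t < b -> derivable_pt_lim f t (df t).

Lemma derivable_pt_lim_exp_weighted t :
  a < t < b ->
  derivable_pt_lim (fun s => exp (L * s) * f s) t (exp (L * t) * (df t + L * f t)).
Proof.
  intros ht.
  assert (Hexp : derivable_pt_lim (fun s => exp (L * s)) t (exp (L * t) * L)).
  { apply (derivable_pt_lim_comp (fun s => L * s) exp t L).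
    - pose proof (derivable_pt_lim_scal id L t 1 (derivable_pt_lim_id t)) as H.
      now rewrite Rmult_1_r in H.
    - apply derivable_pt_lim_exp. }
  replace (exp (L * t) * (df t + L * f t))
    with (exp (L * t) * L * f t + exp (L * t) * df t) by ring.
  exact (derivable_pt_lim_mult _ _ _ _ _ Hexp (f_deriv t ht)).
Qed.

Lemma exp_weighted_le :
  (forall t, a < t < b -> 0 <= df t + L * f t) ->
  forall x y, a < x -> x <= y -> y < b -> exp (L * x) * f x <= exp (L * y) * f y.
Proof.
  intros Hpos x y Hax Hxy Hyb. destruct (Rle_lt_or_eq_dec x y Hxy) as [Hlt|Heq]; [|subst; lra].
  destruct (MVT_cor2 (fun s => exp (L * s) * f s) (fun s => exp (L * s) * (df s + L * f s)) x y Hlt)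
    as [c [Hc Hcxy]].
  { intros c Hc. apply derivable_pt_lim_exp_weighted. lra. }
  assert (0 <= exp (L * c) * (df c + L * f c)).
  { apply Rmult_le_pos; [apply Rlt_le, exp_pos | apply Hpos; lra]. }
  nra.
Qed.

Lemma exp_weighted_lt :
  (forall t, a < t < b -> 0 < df t + L * f t) ->
  forall x y, a < x -> x < y -> y < b -> exp (L * x) * f x < exp (L * y) * f y.
Proof.
  intros Hpos x y Hax Hxy Hyb.
  destruct (MVT_cor2 (fun s => exp (L * s) * f s) (fun s => exp (L * s) * (df s + L * f s)) x y)
    as [c [Hc Hcxy]]; [lra| |].
  { intros c Hc. apply derivable_pt_lim_exp_weighted. lra. }
  assert (0 < exp (L * c) * (df c + L * f c)).
  { apply Rmult_lt_0_compat; [apply exp_pos | apply Hpos; lra]. }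
  nra.
Qed.

End ExpWeighted.

Lemma right_cont_plus (f g : R -> R) :
  right_cont f 0 -> right_cont g 0 -> right_cont (fun t => f t + g t) 0.
Proof.
  intros Hf Hg eps Heps.
  destruct (Hf (eps / 2)) as [d1 [Hd1 D1]]; [lra|].
  destruct (Hg (eps / 2)) as [d2 [Hd2 D2]]; [lra|].
  exists (Rmin d1 d2). split; [now apply Rmin_glb_lt|].
  intros t Ht. pose proof (Rmin_l d1 d2). pose proof (Rmin_r d1 d2).
  specialize (D1 t ltac:(lra)). specialize (D2 t ltac:(lra)).
  apply Rabs_def2 in D1, D2. apply Rabs_def1; lra.
Qed.

Lemma right_cont_opp (f : R -> R) : right_cont f 0 -> right_cont (fun t => - f t) 0.
Proof.
  intros Hf eps Heps. destruct (Hf eps Heps) as [d [Hd D]].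
  exists d. split; [exact Hd|]. intros t Ht.
  replace (- f t - - f 0) with (- (f t - f 0)) by ring.
  rewrite Rabs_Ropp. now apply D.
Qed.

Lemma right_cont_minus (f g : R -> R) :
  right_cont f 0 -> right_cont g 0 -> right_cont (fun t => f t - g t) 0.
Proof. intros Hf Hg. exact (right_cont_plus f (fun t => - g t) Hf (right_cont_opp g Hg)). Qed.

Lemma right_cont_comp (g f : R -> R) :
  continuity_pt g (f 0) -> right_cont f 0 -> right_cont (fun t => g (f t)) 0.
Proof.
  intros Hg Hf eps Heps.
  destruct (Hg eps Heps) as [a [Ha Da]].
  destruct (Hf a Ha) as [d [Hd D]].
  exists d. split; [exact Hd|]. intros t Ht.
  destruct (Req_dec (f t) (f 0)) as [E|E].
  - rewrite E, Rminus_diag, Rabs_R0. exact Heps.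
  - apply (Da (f t)). split; [split; [exact I | congruence]|]. now apply D.
Qed.

Lemma right_cont_near (f : R -> R) (eps t : R) :
  right_cont f 0 -> 0 < eps -> 0 < t -> exists e, 0 < e < t /\ Rabs (f e - f 0) < eps.
Proof.
  intros Hf Heps Ht. destruct (Hf eps Heps) as [d [Hd D]].
  exists (Rmin (d / 2) (t / 2)).
  pose proof (Rmin_l (d / 2) (t / 2)). pose proof (Rmin_r (d / 2) (t / 2)).
  assert (0 < Rmin (d / 2) (t / 2)) by (apply Rmin_glb_lt; lra).
  split; [lra|]. apply D. lra.
Qed.

Section Positivity.
Variables (f df : R -> R) (L T : R).

Lemma pos_persist :
  right_cont f 0 -> 0 < f 0 ->
  (forall t, 0 < t < T -> derivable_pt_lim f t (df t) /\ 0 <= df t + L * f t) ->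
  forall t, 0 < t < T -> 0 < f t.
Proof.
  intros Hrc Hf0 Hd t Ht.
  destruct (right_cont_near f (f 0) t Hrc Hf0 (proj1 Ht)) as [e [He Hfe]].
  apply Rabs_def2 in Hfe.
  assert (exp (L * e) * f e <= exp (L * t) * f t).
  { apply (exp_weighted_le f df L 0 T); try lra; intros s Hs; apply (Hd s Hs). }
  pose proof (exp_pos (L * e)). pose proof (exp_pos (L * t)). nra.
Qed.

Lemma pos_of_strict_growth :
  (forall t, 0 < t < T -> derivable_pt_lim f t (df t) /\ 0 <= f t /\ 0 < df t + L * f t) ->
  forall t, 0 < t < T -> 0 < f t.
Proof.
  intros Hd t Ht.
  assert (exp (L * (t / 2)) * f (t / 2) < exp (L * t) * f t).
  { apply (exp_weighted_lt f df L 0 T); try lra; intros s Hs; apply (Hd s Hs). }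
  assert (0 <= f (t / 2)) by (apply Hd; lra).
  pose proof (exp_pos (L * (t / 2))). pose proof (exp_pos (L * t)). nra.
Qed.

Lemma pos_of_source (g : R -> R) :
  right_cont f 0 ->
  (forall t, 0 < t < T -> derivable_pt_lim f t (df t) /\ 0 <= f t /\
     0 <= df t + L * f t /\ (0 < g t -> 0 < df t + L * f t)) ->
  0 < f 0 \/ (forall t, 0 < t < T -> 0 < g t) ->
  forall t, 0 < t < T -> 0 < f t.
Proof.
  intros Hrc Hd [Hf0 | Hg].
  - apply (pos_persist Hrc Hf0). intros t Ht. apply Hd in Ht. tauto.
  - apply pos_of_strict_growth. intros t Ht. pose proof (Hg t Ht). apply Hd in Ht. tauto.
Qed.

End Positivity.

Lemma gronwall_zero (W dW : R -> R) (K T : R) :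
  0 <= K -> right_cont W 0 -> W 0 = 0 ->
  (forall t, 0 < t < T -> derivable_pt_lim W t (dW t) /\ dW t <= K * W t) ->
  forall t, 0 < t < T -> W t <= 0.
Proof.
  intros HK Hrc HW0 Hd t Ht.
  apply Rnot_lt_le. intros HWt.
  set (eps := exp (- K * t) * W t).
  assert (Heps : 0 < eps) by (apply Rmult_lt_0_compat; [apply exp_pos | exact HWt]).
  destruct (right_cont_near W eps t Hrc Heps (proj1 Ht)) as [e [He HWe]].
  rewrite HW0, Rminus_0_r in HWe. apply Rabs_def2 in HWe.
  assert (exp (- K * e) * - W e <= exp (- K * t) * - W t).
  { apply (exp_weighted_le (fun s => - W s) (fun s => - dW s) (- K) 0 T); try lra.
    - intros s Hs. apply derivable_pt_lim_opp, Hd, Hs.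
    - intros s Hs. destruct (Hd s Hs). lra. }
  assert (exp (- K * e) <= 1).
  { rewrite <- exp_0. destruct (Req_dec K 0) as [->|HK0].
    - rewrite Ropp_0, Rmult_0_l. lra.
    - left. apply exp_increasing. nra. }
  pose proof (exp_pos (- K * e)).
  unfold eps in *. nra.
Qed.

(** * Linear cooperative systems *)

Definition neg_sq (x : R) : R := Rmin x 0 * Rmin x 0.

Lemma neg_sq_ge0 (x : R) : 0 <= neg_sq x.
Proof. apply Rle_0_sqr. Qed.

Lemma neg_sq_of_ge0 (x : R) : 0 <= x -> neg_sq x = 0.
Proof. intros Hx. unfold neg_sq. rewrite Rmin_right by exact Hx. ring. Qed.

Lemma ge0_of_neg_sq_le0 (x : R) : neg_sq x <= 0 -> 0 <= x.
Proof.
  unfold neg_sq. intros H. destruct (Rle_dec 0 x) as [Hx|Hx]; [exact Hx|].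
  rewrite Rmin_left in H by lra. nra.
Qed.

Lemma neg_sq_taylor (x y : R) :
  Rabs (neg_sq y - neg_sq x - 2 * Rmin x 0 * (y - x)) <= (y - x) * (y - x).
Proof.
  unfold neg_sq. apply Rabs_le. pose proof (Rle_0_sqr (y - x)). unfold Rsqr in *.
  destruct (Rle_dec x 0); destruct (Rle_dec y 0);
    [rewrite (Rmin_left x 0), (Rmin_left y 0) | rewrite (Rmin_left x 0), (Rmin_right y 0)
    | rewrite (Rmin_right x 0), (Rmin_left y 0) | rewrite (Rmin_right x 0), (Rmin_right y 0)];
    try lra; split; nra.
Qed.

Lemma derivable_pt_lim_neg_sq (x : R) : derivable_pt_lim neg_sq x (2 * Rmin x 0).
Proof.
  intros eps Heps. exists (mkposreal eps Heps). intros h Hh Hlt. simpl in Hlt.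
  pose proof (neg_sq_taylor x (x + h)) as Hq.
  replace (x + h - x) with h in Hq by ring.
  replace ((neg_sq (x + h) - neg_sq x) / h - 2 * Rmin x 0)
    with ((neg_sq (x + h) - neg_sq x - 2 * Rmin x 0 * h) / h) by (field; exact Hh).
  unfold Rdiv. rewrite Rabs_mult, Rabs_inv.
  pose proof (Rabs_pos_lt h Hh).
  apply (Rmult_lt_reg_r (Rabs h)); [assumption|].
  rewrite Rmult_assoc, Rinv_l, Rmult_1_r by lra.
  assert (h * h = Rabs h * Rabs h) by (rewrite <- Rabs_mult, Rabs_right; nra).
  nra.
Qed.

Lemma continuity_pt_neg_sq (x : R) : continuity_pt neg_sq x.
Proof.
  apply derivable_continuous_pt. exists (2 * Rmin x 0). apply derivable_pt_lim_neg_sq.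
Qed.

(* [du = p v + q w + q' w' + r u] is one row of a linear system whose Metzler coefficient
   matrix is bounded by [L]; only the coupling to [v] is required to be strictly positive. *)
Definition coop_rate (L du u v w w' : R) : Prop :=
  exists p q q' r, 0 < p <= L /\ 0 <= q <= L /\ 0 <= q' <= L /\ - L <= r <= L /\
    du = p * v + q * w + q' * w' + r * u.

Lemma coop_rate_weaken (L L' du u v w w' : R) :
  L <= L' -> coop_rate L du u v w w' -> coop_rate L' du u v w w'.
Proof.
  intros HL (p & q & q' & r & Hp & Hq & Hq' & Hr & Hdu).
  exists p, q, q', r. repeat split; lra.
Qed.

Lemma Rmin0_mul_le (L p u v : R) :
  0 <= p <= L -> Rmin u 0 * (p * v) <= L * (neg_sq u + neg_sq v).
Proof.
  intros Hp. unfold neg_sq.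
  pose proof (Rmin_r u 0). pose proof (Rmin_l v 0). pose proof (Rmin_r v 0).
  pose proof (Rle_0_sqr (Rmin u 0 - Rmin v 0)). unfold Rsqr in *.
  assert (0 <= - Rmin u 0 * (p * (v - Rmin v 0))).
  { apply Rmult_le_pos; [lra|]. apply Rmult_le_pos; lra. }
  assert (0 <= (L - p) * (- Rmin u 0 * - Rmin v 0)).
  { apply Rmult_le_pos; [lra|]. apply Rmult_le_pos; lra. }
  nra.
Qed.

Lemma coop_rate_neg_part (L du u v w w' : R) :
  coop_rate L du u v w w' ->
  Rmin u 0 * du <= 4 * L * (neg_sq u + neg_sq v + neg_sq w + neg_sq w').
Proof.
  intros (p & q & q' & r & Hp & Hq & Hq' & Hr & ->).
  pose proof (Rmin0_mul_le L p u v ltac:(lra)).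
  pose proof (Rmin0_mul_le L q u w Hq).
  pose proof (Rmin0_mul_le L q' u w' Hq').
  assert (Rmin u 0 * u = neg_sq u).
  { unfold neg_sq. destruct (Rle_dec u 0); [rewrite Rmin_left | rewrite Rmin_right]; lra. }
  assert (r * neg_sq u <= L * neg_sq u) by (pose proof (neg_sq_ge0 u); nra).
  pose proof (neg_sq_ge0 u). pose proof (neg_sq_ge0 v).
  pose proof (neg_sq_ge0 w). pose proof (neg_sq_ge0 w').
  nra.
Qed.

Lemma coop_rate_growth (L du u v w w' : R) :
  coop_rate L du u v w w' -> 0 <= u -> 0 <= v -> 0 <= w -> 0 <= w' ->
  0 <= du + L * u /\ (0 < v -> 0 < du + L * u).
Proof.
  intros (p & q & q' & r & Hp & Hq & Hq' & Hr & ->) Hu Hv Hw Hw'.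
  assert (0 <= (r + L) * u) by (apply Rmult_le_pos; lra).
  split; [|intros]; nra.
Qed.

(* The strict couplings u4 -> u1 -> u2 -> u3 -> u4 form a cycle, so the system is irreducible. *)
Section CooperativeCycle.
Variables (u1 u2 u3 u4 du1 du2 du3 du4 : R -> R) (L T : R).
Hypotheses (rc1 : right_cont u1 0) (rc2 : right_cont u2 0)
  (rc3 : right_cont u3 0) (rc4 : right_cont u4 0).
Hypothesis deriv : forall t, 0 < t < T ->
  derivable_pt_lim u1 t (du1 t) /\ derivable_pt_lim u2 t (du2 t) /\
  derivable_pt_lim u3 t (du3 t) /\ derivable_pt_lim u4 t (du4 t).
Hypothesis rates : forall t, 0 < t < T ->
  coop_rate L (du1 t) (u1 t) (u4 t) (u2 t) (u3 t) /\
  coop_rate L (du2 t) (u2 t) (u1 t) (u3 t) (u4 t) /\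
  coop_rate L (du3 t) (u3 t) (u2 t) (u4 t) (u1 t) /\
  coop_rate L (du4 t) (u4 t) (u3 t) (u2 t) (u1 t).
Hypothesis init_nonneg : 0 <= u1 0 /\ 0 <= u2 0 /\ 0 <= u3 0 /\ 0 <= u4 0.

Lemma cycle_nonneg t : 0 < t < T ->
  0 <= u1 t /\ 0 <= u2 t /\ 0 <= u3 t /\ 0 <= u4 t.
Proof.
  intros Ht.
  set (W := fun s => neg_sq (u1 s) + neg_sq (u2 s) + neg_sq (u3 s) + neg_sq (u4 s)).
  assert (HL : 0 <= L).
  { destruct (rates t Ht) as [(p & _ & _ & _ & Hp & _) _]. lra. }
  assert (HW : W t <= 0).
  { apply (gronwall_zero W (fun s => 2 * Rmin (u1 s) 0 * du1 s + 2 * Rmin (u2 s) 0 * du2 s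
                            + 2 * Rmin (u3 s) 0 * du3 s + 2 * Rmin (u4 s) 0 * du4 s) (32 * L) T);
      try lra; try exact Ht.
    - unfold W. repeat apply right_cont_plus;
        apply right_cont_comp; try apply continuity_pt_neg_sq; assumption.
    - unfold W. destruct init_nonneg as (? & ? & ? & ?).
      rewrite !neg_sq_of_ge0 by assumption. ring.
    - intros s Hs. destruct (deriv s Hs) as (d1 & d2 & d3 & d4). split.
      + unfold W. repeat apply derivable_pt_lim_plus;
          apply (derivable_pt_lim_comp _ neg_sq); try apply derivable_pt_lim_neg_sq; assumption.
      + destruct (rates s Hs) as (r1 & r2 & r3 & r4).
        apply coop_rate_neg_part in r1, r2, r3, r4. unfold W. lra. }
  unfold W in HW.
  pose proof (neg_sq_ge0 (u1 t)). pose proof (neg_sq_ge0 (u2 t)).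
  pose proof (neg_sq_ge0 (u3 t)). pose proof (neg_sq_ge0 (u4 t)).
  repeat split; apply ge0_of_neg_sq_le0; lra.
Qed.

Lemma cycle_pos :
  (0 < u1 0 \/ 0 < u2 0 \/ 0 < u3 0 \/ 0 < u4 0) ->
  forall t, 0 < t < T -> 0 < u1 t /\ 0 < u2 t /\ 0 < u3 t /\ 0 < u4 t.
Proof.
  set (P f := forall t, 0 < t < T -> 0 < f t).
  assert (step1 : 0 < u1 0 \/ P u4 -> P u1).
  { intros Hsrc. refine (pos_of_source u1 du1 L T u4 rc1 _ Hsrc). intros t Ht.
    destruct (deriv t Ht) as (d & _). destruct (cycle_nonneg t Ht) as (n1 & n2 & n3 & n4).
    destruct (rates t Ht) as (r & _). pose proof (coop_rate_growth _ _ _ _ _ _ r n1 n4 n2 n3). tauto. }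
  assert (step2 : 0 < u2 0 \/ P u1 -> P u2).
  { intros Hsrc. refine (pos_of_source u2 du2 L T u1 rc2 _ Hsrc). intros t Ht.
    destruct (deriv t Ht) as (_ & d & _). destruct (cycle_nonneg t Ht) as (n1 & n2 & n3 & n4).
    destruct (rates t Ht) as (_ & r & _). pose proof (coop_rate_growth _ _ _ _ _ _ r n2 n1 n3 n4). tauto. }
  assert (step3 : 0 < u3 0 \/ P u2 -> P u3).
  { intros Hsrc. refine (pos_of_source u3 du3 L T u2 rc3 _ Hsrc). intros t Ht.
    destruct (deriv t Ht) as (_ & _ & d & _). destruct (cycle_nonneg t Ht) as (n1 & n2 & n3 & n4).
    destruct (rates t Ht) as (_ & _ & r & _). pose proof (coop_rate_growth _ _ _ _ _ _ r n3 n2 n4 n1). tauto. }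
  assert (step4 : 0 < u4 0 \/ P u3 -> P u4).
  { intros Hsrc. refine (pos_of_source u4 du4 L T u3 rc4 _ Hsrc). intros t Ht.
    destruct (deriv t Ht) as (_ & _ & _ & d). destruct (cycle_nonneg t Ht) as (n1 & n2 & n3 & n4).
    destruct (rates t Ht) as (_ & _ & _ & r). pose proof (coop_rate_growth _ _ _ _ _ _ r n4 n3 n2 n1). tauto. }
  intros Hinit t Ht.
  assert (P u1 /\ P u2 /\ P u3 /\ P u4) as (p1 & p2 & p3 & p4) by tauto.
  auto.
Qed.

End CooperativeCycle.

(** * Decreasing nonlinearities with bounded slopes *)

Lemma mul_bounds (a b A B : R) : 0 < a <= A -> 0 < b <= B -> 0 < a * b <= A * B.
Proof. intros Ha Hb. split; [apply Rmult_lt_0_compat | apply Rmult_le_compat]; lra. Qed.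

Lemma div_le_of_le_mul (a b c : R) : 0 < c -> a <= b * c -> a / c <= b.
Proof.
  intros Hc Hab. apply Rmult_le_reg_r with c; [exact Hc|].
  replace (a / c * c) with a by (field; lra). exact Hab.
Qed.

Lemma quadratic_ratio_bounds (q0 q1 q2 x : R) :
  0 < q0 -> 0 <= q1 -> 0 < q2 -> 0 <= x ->
  0 < 1 / (q2 * x ^ 2 + q1 * x + q0) <= 1 / q0 + 1 / q2 /\
  0 <= x / (q2 * x ^ 2 + q1 * x + q0) <= 1 / q0 + 1 / q2.
Proof.
  intros H0 H1 H2 Hx.
  assert (0 <= q1 * x) by (apply Rmult_le_pos; lra).
  assert (0 <= q2 * x ^ 2) by (apply Rmult_le_pos; [lra | apply pow2_ge_0]).
  assert (HQ : 0 < q2 * x ^ 2 + q1 * x + q0) by lra.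
  assert (HQ0 : q0 <= q2 * x ^ 2 + q1 * x + q0) by lra.
  set (Q := q2 * x ^ 2 + q1 * x + q0) in *.
  assert (Hq0 : 1 <= 1 / q0 * Q).
  { replace (1 / q0 * Q) with (1 + (Q - q0) / q0) by (field; lra).
    assert (0 <= (Q - q0) / q0) by (apply Rle_mult_inv_pos; lra). lra. }
  assert (Hq2 : x ^ 2 <= 1 / q2 * Q).
  { replace (1 / q2 * Q) with (x ^ 2 + (q1 * x + q0) / q2) by (unfold Q; field; lra).
    assert (0 <= (q1 * x + q0) / q2) by (apply Rle_mult_inv_pos; lra). lra. }
  assert (0 < 1 / q2) by (apply Rdiv_lt_0_compat; lra).
  repeat split.
  - apply Rdiv_lt_0_compat; lra.
  - apply div_le_of_le_mul; [lra|]. rewrite Rmult_plus_distr_r. nra.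
  - apply Rle_mult_inv_pos; lra.
  - (* x <= 1 + x ^ 2 <= Q / q0 + Q / q2 *)
    apply div_le_of_le_mul; [lra|]. rewrite Rmult_plus_distr_r. nra.
Qed.

Lemma bilinear_ratio_le (a0 a1 a2 q0 q1 q2 x y : R) :
  0 <= a0 -> 0 <= a1 -> 0 <= a2 -> 0 < q0 -> 0 <= q1 -> 0 < q2 -> 0 <= x -> 0 <= y ->
  (a0 + a1 * (x + y) + a2 * (x * y))
    / ((q2 * x ^ 2 + q1 * x + q0) * (q2 * y ^ 2 + q1 * y + q0))
  <= (a0 + 2 * a1 + a2) * (1 / q0 + 1 / q2) ^ 2.
Proof.
  intros Ha0 Ha1 Ha2 Hq0 Hq1 Hq2 Hx Hy.
  assert (0 <= q2 * x ^ 2 + q1 * x) by (pose proof (pow2_ge_0 x); nra).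
  assert (0 <= q2 * y ^ 2 + q1 * y) by (pose proof (pow2_ge_0 y); nra).
  destruct (quadratic_ratio_bounds q0 q1 q2 x) as [Ix Jx]; try assumption.
  destruct (quadratic_ratio_bounds q0 q1 q2 y) as [Iy Jy]; try assumption.
  set (Qx := q2 * x ^ 2 + q1 * x + q0) in *. set (Qy := q2 * y ^ 2 + q1 * y + q0) in *.
  set (B := 1 / q0 + 1 / q2) in *.
  replace ((a0 + a1 * (x + y) + a2 * (x * y)) / (Qx * Qy))
    with (a0 * (1 / Qx * (1 / Qy)) + a1 * (x / Qx * (1 / Qy) + 1 / Qx * (y / Qy))
          + a2 * (x / Qx * (y / Qy))) by (field; unfold Qx, Qy; lra).
  assert (1 / Qx * (1 / Qy) <= B * B) by (apply Rmult_le_compat; lra).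
  assert (x / Qx * (1 / Qy) <= B * B) by (apply Rmult_le_compat; lra).
  assert (1 / Qx * (y / Qy) <= B * B) by (apply Rmult_le_compat; lra).
  assert (x / Qx * (y / Qy) <= B * B) by (apply Rmult_le_compat; lra).
  nra.
Qed.

Definition decreasing_slope (f : R -> R) (Lam : R) : Prop :=
  forall x y, 0 < x -> 0 < y -> exists rho, 0 < rho <= Lam /\ f x - f y = rho * (y - x).

Lemma sq_plus_pos (x A : R) : 0 < A -> 0 < x ^ 2 + A.
Proof. intros HA. pose proof (pow2_ge_0 x). lra. Qed.

Definition hill (A x : R) : R := A / (x ^ 2 + A).

Lemma hill_bounds (A x : R) : 0 < A -> 0 < x -> 0 < hill A x < 1.
Proof.
  intros HA Hx. unfold hill. assert (0 < x ^ 2) by (apply pow_lt; lra).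
  split; [apply Rdiv_lt_0_compat; lra|].
  apply Rmult_lt_reg_r with (x ^ 2 + A); [lra|].
  replace (A / (x ^ 2 + A) * (x ^ 2 + A)) with A by (field; lra). lra.
Qed.

Lemma hill_decreasing_slope (A : R) : 0 < A -> exists Lam, decreasing_slope (hill A) Lam.
Proof.
  intros HA. exists (2 * A * (1 / A + 1) ^ 2). intros x y Hx Hy.
  exists (A * (x + y) / ((x ^ 2 + A) * (y ^ 2 + A))).
  pose proof (sq_plus_pos x A HA). pose proof (sq_plus_pos y A HA).
  repeat split.
  - apply Rdiv_lt_0_compat; [nra | now apply Rmult_lt_0_compat].
  - pose proof (bilinear_ratio_le 0 A 0 A 0 1 x y) as Hb.
    replace (0 + A * (x + y) + 0 * (x * y)) with (A * (x + y)) in Hb by ring.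
    replace (1 * x ^ 2 + 0 * x + A) with (x ^ 2 + A) in Hb by ring.
    replace (1 * y ^ 2 + 0 * y + A) with (y ^ 2 + A) in Hb by ring.
    replace ((0 + 2 * A + 0) * (1 / A + 1 / 1) ^ 2) with (2 * A * (1 / A + 1) ^ 2) in Hb by (field; lra).
    apply Hb; lra.
  - unfold hill. field. lra.
Qed.

Section Nfun.
Variables bt bt1 bt2 c cm k k1 k2 : R.
Hypotheses (Hbt : 0 < bt) (Hbt1 : bt < bt1) (Hbt2 : bt1 < bt2) (Hc : 0 < c) (Hcm : 0 < cm)
  (Hk2 : 0 < k2) (Hk1 : k2 < k1) (Hk : k1 < k).

Let N := Nfun bt bt1 bt2 c cm k k1 k2.
Let D := Defs.Delta bt bt1 bt2 c cm.
Let E1 := e1 bt bt1 bt2 c cm.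
Let E3 := e3 bt bt1 bt2 c cm.

Lemma e1_pos : 0 < E1.
Proof. unfold E1, e1. nra. Qed.

Lemma e3_pos : 0 < E3.
Proof. unfold E3, e3. nra. Qed.

Lemma Delta_pos x : 0 <= x -> 0 < D x.
Proof.
  intros Hx. pose proof e1_pos. pose proof e3_pos. unfold D, Defs.Delta. fold E1 E3.
  assert (0 <= bt2 * c ^ 2 * x ^ 2) by (repeat apply Rmult_le_pos; try apply pow2_ge_0; lra).
  assert (0 <= E3 * c * x) by (repeat apply Rmult_le_pos; lra).
  assert (0 < E1 * bt) by (apply Rmult_lt_0_compat; lra).
  lra.
Qed.

(* Numerator coefficients of the difference quotient of N; their positivity is where the
   orderings of the beta's and k's enter. *)
Let r0 := c * E1 * (bt2 + cm) * (k * bt1 - k1 * bt).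
Let r1 := c ^ 2 * E1 * (k * bt2 - k2 * bt).
Let r2 := c ^ 3 * (bt2 * (k * bt2 + k1 * bt2 + k1 * cm) - k2 * E3).

Lemma numerator_coeffs_pos : 0 < r0 /\ 0 < r1 /\ 0 < r2.
Proof.
  pose proof e1_pos. pose proof e3_pos.
  assert (0 < k * bt1 - k1 * bt) by nra.
  assert (0 < k * bt2 - k2 * bt) by nra.
  assert (0 < k1 * bt2 - k2 * bt1) by nra.
  assert (0 < bt2 * (k * bt2 + k1 * bt2 + k1 * cm) - k2 * E3).
  { unfold E3, e3.
    replace (bt2 * (k * bt2 + k1 * bt2 + k1 * cm) - k2 * (bt * bt2 + bt1 * bt2 + bt1 * cm))
      with (bt2 * (k * bt2 - k2 * bt) + (bt2 + cm) * (k1 * bt2 - k2 * bt1)) by ring.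
    nra. }
  unfold r0, r1, r2. repeat split; repeat apply Rmult_lt_0_compat; try apply pow_lt; lra.
Qed.

Lemma Nfun_sub x y : 0 <= x -> 0 <= y ->
  N x - N y = (y - x) * ((r0 + r1 * (x + y) + r2 * (x * y)) / (D x * D y)).
Proof.
  intros Hx Hy. pose proof (Delta_pos x Hx). pose proof (Delta_pos y Hy).
  unfold N, Nfun, r0, r1, r2, E1, E3, e2. unfold D in *. unfold Defs.Delta, e1, e3 in *.
  field. lra.
Qed.

Lemma Nfun_quotient_bounds x y : 0 <= x -> 0 <= y ->
  0 < (r0 + r1 * (x + y) + r2 * (x * y)) / (D x * D y)
    <= (r0 + 2 * r1 + r2) * (1 / (E1 * bt) + 1 / (bt2 * c ^ 2)) ^ 2.
Proof.
  intros Hx Hy. destruct numerator_coeffs_pos as (H0 & H1 & H2).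
  pose proof (Delta_pos x Hx). pose proof (Delta_pos y Hy).
  pose proof e1_pos. pose proof e3_pos.
  assert (0 <= r1 * (x + y)) by (apply Rmult_le_pos; lra).
  assert (0 <= r2 * (x * y)) by (apply Rmult_le_pos; [lra | apply Rmult_le_pos; lra]).
  split.
  - apply Rdiv_lt_0_compat; [lra | now apply Rmult_lt_0_compat].
  - unfold D, Defs.Delta. fold E1 E3.
    apply bilinear_ratio_le; try lra.
    + apply Rmult_lt_0_compat; lra.
    + apply Rmult_le_pos; lra.
    + apply Rmult_lt_0_compat; [lra | apply pow_lt; lra].
Qed.

Lemma Nfun_bounds x : 0 <= x -> 0 < N x <= k / bt.
Proof.
  intros Hx.
  assert (HN0 : N 0 = k / bt).
  { pose proof e1_pos. unfold N, Nfun, Defs.Delta. fold E1. field. lra. }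
  pose proof (Nfun_sub x 0 Hx (Rle_refl 0)) as Hsub.
  destruct (Nfun_quotient_bounds x 0 Hx (Rle_refl 0)) as [Hq _].
  assert (0 <= x * ((r0 + r1 * (x + 0) + r2 * (x * 0)) / (D x * D 0))) by (apply Rmult_le_pos; lra).
  split; [|lra].
  pose proof e1_pos. unfold N, Nfun, e2. fold E1.
  apply Rdiv_lt_0_compat; [|exact (Delta_pos x Hx)].
  assert (0 <= bt2 * c * x) by (repeat apply Rmult_le_pos; lra).
  assert (0 <= k1 * (c * (bt2 + cm)) * x) by (repeat apply Rmult_le_pos; lra).
  assert (0 <= k2 * c ^ 2 * x ^ 2) by (repeat apply Rmult_le_pos; try apply pow2_ge_0; lra).
  assert (0 < k * (bt2 * c * x + E1)) by (apply Rmult_lt_0_compat; lra).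
  lra.
Qed.

Lemma Nfun_decreasing_slope : exists Lam, decreasing_slope N Lam.
Proof.
  eexists. intros x y Hx Hy.
  eexists. split; [apply (Nfun_quotient_bounds x y); lra | rewrite Nfun_sub by lra; ring].
Qed.

End Nfun.

(** * The reduced system *)

(* Both [s] and [z] couple strictly; the cycle uses [z] for mu34 and [s] for mu200. *)
Lemma hill_pair_coop (C As Az bm : R) :
  0 < C -> 0 < As -> 0 < Az -> 0 < bm ->
  exists L, forall m1 s1 z1 m2 s2 z2 w', 0 < s1 -> 0 < z1 -> 0 < s2 -> 0 < z2 ->
    let du := (C * As * Az / ((s2 ^ 2 + As) * (z2 ^ 2 + Az)) - bm * m2)
              - (C * As * Az / ((s1 ^ 2 + As) * (z1 ^ 2 + Az)) - bm * m1) in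
    coop_rate L du (m2 - m1) (z1 - z2) (s1 - s2) w' /\
    coop_rate L du (m2 - m1) (s1 - s2) (z1 - z2) w'.
Proof.
  intros HC HAs HAz Hbm.
  destruct (hill_decreasing_slope As HAs) as [Ls HLs].
  destruct (hill_decreasing_slope Az HAz) as [Lz HLz].
  exists (C * Ls + C * Lz + bm). intros m1 s1 z1 m2 s2 z2 w' Hs1 Hz1 Hs2 Hz2 du.
  destruct (HLs s2 s1 Hs2 Hs1) as (rs & Hrs & Es).
  destruct (HLz z2 z1 Hz2 Hz1) as (rz & Hrz & Ez).
  pose proof (hill_bounds As s1 HAs Hs1). pose proof (hill_bounds Az z2 HAz Hz2).
  assert (Hp : 0 < C * hill As s1 * rz <= C * 1 * Lz) by (repeat apply mul_bounds; lra).
  assert (Hq : 0 < C * rs * hill Az z2 <= C * Ls * 1) by (repeat apply mul_bounds; lra).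
  assert (Hdu : du = C * hill As s1 * rz * (z1 - z2) + C * rs * hill Az z2 * (s1 - s2) + 0 * w'
                     + - bm * (m2 - m1)).
  { assert (Eprod : forall s z, C * As * Az / ((s ^ 2 + As) * (z ^ 2 + Az)) = C * hill As s * hill Az z).
    { intros s z. pose proof (pow2_ge_0 s). pose proof (pow2_ge_0 z).
      unfold hill. field. lra. }
    unfold du. rewrite !Eprod.
    replace (hill As s2) with (hill As s1 + rs * (s1 - s2)) by lra.
    replace (hill Az z1) with (hill Az z2 - rz * (z1 - z2)) by lra.
    ring. }
  split; [exists (C * hill As s1 * rz), (C * rs * hill Az z2), 0, (- bm)
         | exists (C * rs * hill Az z2), (C * hill As s1 * rz), 0, (- bm)];
    repeat split; lra.
Qed.

Lemma hill_repressed_coop (f : R -> R) (M Lf C As km : R) :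
  (forall x, 0 < x -> 0 < f x <= M) -> decreasing_slope f Lf ->
  0 < C -> 0 < As -> 0 < km ->
  exists L, forall a1 s1 a2 s2 w w', 0 < a1 -> 0 < s1 -> 0 < a2 -> 0 < s2 ->
    coop_rate L ((C * As / (s1 ^ 2 + As) * f a1 - km * s1) - (C * As / (s2 ^ 2 + As) * f a2 - km * s2))
      (s1 - s2) (a2 - a1) w w'.
Proof.
  intros Hf HLf HC HAs Hkm.
  destruct (hill_decreasing_slope As HAs) as [Ls HLs].
  exists (C * Lf + C * Ls * M + km). intros a1 s1 a2 s2 w w' Ha1 Hs1 Ha2 Hs2.
  destruct (HLs s1 s2 Hs1 Hs2) as (rs & Hrs & Es).
  destruct (HLf a1 a2 Ha1 Ha2) as (rf & Hrf & Ef).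
  pose proof (hill_bounds As s2 HAs Hs2). pose proof (Hf a1 Ha1).
  assert (0 < C * hill As s2 * rf <= C * 1 * Lf) by (repeat apply mul_bounds; lra).
  assert (0 < C * rs * f a1 <= C * Ls * M) by (repeat apply mul_bounds; lra).
  exists (C * hill As s2 * rf), 0, 0, (- (C * rs * f a1) - km).
  repeat split; try lra.
  assert (Ehill : forall s, C * As / (s ^ 2 + As) = C * hill As s).
  { intros s. pose proof (pow2_ge_0 s). unfold hill. field. lra. }
  rewrite !Ehill.
  replace (hill As s1) with (hill As s2 + rs * (s2 - s1)) by lra.
  replace (f a2) with (f a1 - rf * (a2 - a1)) by lra.
  ring.
Qed.

Lemma hill_activated_coop (f : R -> R) (M Lf C As Az km dz : R) :
  (forall x, 0 < x -> 0 < f x <= M) -> decreasing_slope f Lf ->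
  0 < C -> 0 < As -> 0 < Az -> 0 < km ->
  exists L, forall s1 c1 z1 s2 c2 z2 w', 0 < s1 -> 0 < c1 -> 0 < z1 -> 0 < s2 -> 0 < c2 -> 0 < z2 ->
    coop_rate L ((dz + C * s1 ^ 2 * z1 ^ 2 / ((s1 ^ 2 + As) * (z1 ^ 2 + Az)) * f c1 - km * z1)
                 - (dz + C * s2 ^ 2 * z2 ^ 2 / ((s2 ^ 2 + As) * (z2 ^ 2 + Az)) * f c2 - km * z2))
      (z1 - z2) (c2 - c1) (s1 - s2) w'.
Proof.
  intros Hf HLf HC HAs HAz Hkm.
  destruct (hill_decreasing_slope As HAs) as [Ls HLs].
  destruct (hill_decreasing_slope Az HAz) as [Lz HLz].
  exists (C * Lf + C * Ls * M + (C * Lz * M + km)).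
  intros s1 c1 z1 s2 c2 z2 w' Hs1 Hc1 Hz1 Hs2 Hc2 Hz2.
  destruct (HLs s1 s2 Hs1 Hs2) as (rs & Hrs & Es).
  destruct (HLz z1 z2 Hz1 Hz2) as (rz & Hrz & Ez).
  destruct (HLf c1 c2 Hc1 Hc2) as (rf & Hrf & Ef).
  set (J A x := 1 - hill A x).
  assert (HJ : forall A x, 0 < A -> 0 < x -> 0 < J A x <= 1).
  { intros A x HA Hx. pose proof (hill_bounds A x HA Hx). unfold J. lra. }
  pose proof (HJ As s2 HAs Hs2). pose proof (HJ Az z1 HAz Hz1). pose proof (HJ Az z2 HAz Hz2).
  pose proof (Hf c1 Hc1).
  assert (0 < C * J As s2 * J Az z2 * rf <= C * 1 * 1 * Lf) by (repeat apply mul_bounds; lra).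
  assert (0 < C * rs * J Az z1 * f c1 <= C * Ls * 1 * M) by (repeat apply mul_bounds; lra).
  assert (0 < C * J As s2 * rz * f c1 <= C * 1 * Lz * M) by (repeat apply mul_bounds; lra).
  exists (C * J As s2 * J Az z2 * rf), (C * rs * J Az z1 * f c1), 0, (C * J As s2 * rz * f c1 - km).
  repeat split; try lra.
  assert (Eact : forall s z, C * s ^ 2 * z ^ 2 / ((s ^ 2 + As) * (z ^ 2 + Az)) = C * J As s * J Az z).
  { intros s z. pose proof (pow2_ge_0 s). pose proof (pow2_ge_0 z).
    unfold J, hill. field. lra. }
  rewrite !Eact. unfold J.
  replace (hill As s1) with (hill As s2 + rs * (s2 - s1)) by lra.
  replace (hill Az z1) with (hill Az z2 + rz * (z2 - z1)) by lra.
  replace (f c2) with (f c1 - rf * (c2 - c1)) by lra.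
  ring.
Qed.

Lemma G_difference_coop (p : params) : valid_params p ->
  exists L, forall a1 b1 c1 d1 a2 b2 c2 d2,
    in_open_orthant a1 b1 c1 d1 -> in_open_orthant a2 b2 c2 d2 ->
    coop_rate L (G_mu34 p a2 b2 c2 d2 - G_mu34 p a1 b1 c1 d1) (a2 - a1) (d1 - d2) (b1 - b2) (c2 - c1) /\
    coop_rate L (G_s p a1 b1 c1 d1 - G_s p a2 b2 c2 d2) (b1 - b2) (a2 - a1) (c2 - c1) (d1 - d2) /\
    coop_rate L (G_mu200 p a2 b2 c2 d2 - G_mu200 p a1 b1 c1 d1) (c2 - c1) (b1 - b2) (d1 - d2) (a2 - a1) /\
    coop_rate L (G_z p a1 b1 c1 d1 - G_z p a2 b2 c2 d2) (d1 - d2) (c2 - c1) (b1 - b2) (a2 - a1).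
Proof.
  intros Hp. unfold valid_params in Hp. decompose [and] Hp.
  destruct (hill_pair_coop (b_34 p * E_34 p) (A_s p) (A_z p) (b_m34 p)) as [L1 HL1];
    try apply Rmult_lt_0_compat; try assumption.
  destruct (hill_pair_coop (b_200 p * E_200 p) (A_s p) (A_z p) (b_m200 p)) as [L3 HL3];
    try apply Rmult_lt_0_compat; try assumption.
  destruct (Nfun_decreasing_slope (b_s p) (b_s1 p) (b_s2 p) (c_s p) (c_ms p) (k_s p) (k_s1 p) (k_s2 p))
    as [Ls HLs]; try assumption.
  destruct (Nfun_decreasing_slope (b_z p) (b_z1 p) (b_z2 p) (c_z p) (c_mz p) (k_z p) (k_z1 p) (k_z2 p))
    as [Lz HLz]; try assumption.
  destruct (hill_repressed_coop (N_s p) (k_s p / b_s p) Ls (g_s p * E_S p) (A_s p) (k_ms p)) as [L2 HL2];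
    try apply Rmult_lt_0_compat; try assumption.
  { intros x Hx. apply Nfun_bounds; lra. }
  destruct (hill_activated_coop (N_z p) (k_z p / b_z p) Lz (g_z p * E_Z p) (A_s p) (A_z p) (k_mz p) (d_z p))
    as [L4 HL4]; try apply Rmult_lt_0_compat; try assumption.
  { intros x Hx. apply Nfun_bounds; lra. }
  pose proof (Rmax_l L1 L2). pose proof (Rmax_r L1 L2).
  pose proof (Rmax_l L3 L4). pose proof (Rmax_r L3 L4).
  pose proof (Rmax_l (Rmax L1 L2) (Rmax L3 L4)). pose proof (Rmax_r (Rmax L1 L2) (Rmax L3 L4)).
  exists (Rmax (Rmax L1 L2) (Rmax L3 L4)).
  intros a1 b1 c1 d1 a2 b2 c2 d2 (Ha1 & Hb1 & Hc1 & Hd1) (Ha2 & Hb2 & Hc2 & Hd2).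
  split; [|split; [|split]].
  - apply (coop_rate_weaken L1); [lra|]. exact (proj1 (HL1 a1 b1 d1 a2 b2 d2 (c2 - c1) Hb1 Hd1 Hb2 Hd2)).
  - apply (coop_rate_weaken L2); [lra|]. exact (HL2 a1 b1 a2 b2 (c2 - c1) (d1 - d2) Ha1 Hb1 Ha2 Hb2).
  - apply (coop_rate_weaken L3); [lra|]. exact (proj2 (HL3 c1 b1 d1 c2 b2 d2 (a2 - a1) Hb1 Hd1 Hb2 Hd2)).
  - apply (coop_rate_weaken L4); [lra|]. exact (HL4 b1 c1 d1 b2 c2 d2 (a2 - a1) Hb1 Hc1 Hd1 Hb2 Hc2 Hd2).
Qed.

Lemma solution_pos (p : params) (T : R) (a b c d : R -> R) :
  valid_params p -> is_solution p T a b c d -> in_open_orthant (a 0) (b 0) (c 0) (d 0) ->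
  forall t, 0 < t < T -> in_open_orthant (a t) (b t) (c t) (d t).
Proof.
  intros Hp (ra & rb & rc & rd & D) (Ha0 & Hb0 & Hc0 & Hd0). unfold valid_params in Hp. decompose [and] Hp.
  assert (Hden : forall t, 0 < (b t ^ 2 + A_s p) * (d t ^ 2 + A_z p))
    by (intros; apply Rmult_lt_0_compat; apply sq_plus_pos; assumption).
  assert (Ha : forall t, 0 < t < T -> 0 < a t).
  { apply (pos_persist a (fun t => G_mu34 p (a t) (b t) (c t) (d t)) (b_m34 p) T ra Ha0).
    intros t Ht. split; [apply (D t Ht)|].
    unfold G_mu34.
    assert (0 < b_34 p * E_34 p * A_s p * A_z p / ((b t ^ 2 + A_s p) * (d t ^ 2 + A_z p)))
      by (apply Rdiv_lt_0_compat; [repeat apply Rmult_lt_0_compat | apply Hden]; assumption).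
    lra. }
  assert (Hc : forall t, 0 < t < T -> 0 < c t).
  { apply (pos_persist c (fun t => G_mu200 p (a t) (b t) (c t) (d t)) (b_m200 p) T rc Hc0).
    intros t Ht. split; [apply (D t Ht)|].
    unfold G_mu200.
    assert (0 < b_200 p * E_200 p * A_s p * A_z p / ((b t ^ 2 + A_s p) * (d t ^ 2 + A_z p)))
      by (apply Rdiv_lt_0_compat; [repeat apply Rmult_lt_0_compat | apply Hden]; assumption).
    lra. }
  assert (Hb : forall t, 0 < t < T -> 0 < b t).
  { apply (pos_persist b (fun t => G_s p (a t) (b t) (c t) (d t)) (k_ms p) T rb Hb0).
    intros t Ht. split; [apply (D t Ht)|].
    unfold G_s.
    assert (0 < N_s p (a t)) by (apply Nfun_bounds; try apply Rlt_le, Ha; assumption).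
    assert (0 < g_s p * E_S p * A_s p / (b t ^ 2 + A_s p) * N_s p (a t)).
    { apply Rmult_lt_0_compat; [apply Rdiv_lt_0_compat|];
        [repeat apply Rmult_lt_0_compat | apply sq_plus_pos |]; assumption. }
    lra. }
  assert (Hd : forall t, 0 < t < T -> 0 < d t).
  { apply (pos_persist d (fun t => G_z p (a t) (b t) (c t) (d t)) (k_mz p) T rd Hd0).
    intros t Ht. split; [apply (D t Ht)|].
    unfold G_z.
    assert (0 < N_z p (c t)) by (apply Nfun_bounds; try apply Rlt_le, Hc; assumption).
    assert (0 <= g_z p * E_Z p * b t ^ 2 * d t ^ 2 / ((b t ^ 2 + A_s p) * (d t ^ 2 + A_z p)) * N_z p (c t)).
    { apply Rmult_le_pos; [apply Rle_mult_inv_pos; [|apply Hden] | lra].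
      pose proof (pow2_ge_0 (b t)). pose proof (pow2_ge_0 (d t)).
      assert (0 < g_z p * E_Z p) by (apply Rmult_lt_0_compat; assumption).
      apply Rmult_le_pos; [apply Rmult_le_pos|]; lra. }
    lra. }
  intros t Ht. repeat split; auto.
Qed.

Lemma Csigma_pos_component (a1 b1 c1 d1 a2 b2 c2 d2 : R) :
  in_Csigma (a1 - a2) (b1 - b2) (c1 - c2) (d1 - d2) ->
  (a1, b1, c1, d1) <> (a2, b2, c2, d2) ->
  0 < a2 - a1 \/ 0 < b1 - b2 \/ 0 < c2 - c1 \/ 0 < d1 - d2.
Proof.
  intros (Ha & Hb & Hc & Hd) Hne.
  destruct (Req_dec a1 a2) as [<-|]; [|lra].
  destruct (Req_dec b1 b2) as [<-|]; [|lra].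
  destruct (Req_dec c1 c2) as [<-|]; [|lra].
  destruct (Req_dec d1 d2) as [<-|]; [|lra].
  now contradiction Hne.
Qed.

Theorem mainTheorem4 (p : params) (Hp : valid_params p) (T : R)
  (x1a x1b x1c x1d x2a x2b x2c x2d : R -> R) :
  is_solution p T x1a x1b x1c x1d ->
  is_solution p T x2a x2b x2c x2d ->
  in_open_orthant (x1a 0) (x1b 0) (x1c 0) (x1d 0) ->
  in_open_orthant (x2a 0) (x2b 0) (x2c 0) (x2d 0) ->
  in_Csigma (x1a 0 - x2a 0) (x1b 0 - x2b 0) (x1c 0 - x2c 0) (x1d 0 - x2d 0) ->
  (x1a 0, x1b 0, x1c 0, x1d 0) <> (x2a 0, x2b 0, x2c 0, x2d 0) ->
  forall t, 0 < t < T ->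
    in_int_Csigma (x1a t - x2a t) (x1b t - x2b t) (x1c t - x2c t) (x1d t - x2d t).
Proof.
  intros S1 S2 O1 O2 HC Hne.
  pose proof (solution_pos p T _ _ _ _ Hp S1 O1) as P1.
  pose proof (solution_pos p T _ _ _ _ Hp S2 O2) as P2.
  pose proof (Csigma_pos_component _ _ _ _ _ _ _ _ HC Hne) as Hstart.
  destruct (G_difference_coop p Hp) as [L HL].
  destruct S1 as (ra1 & rb1 & rc1 & rd1 & D1), S2 as (ra2 & rb2 & rc2 & rd2 & D2).
  destruct HC as (Ha & Hb & Hc & Hd).
  intros t Ht.
  enough (0 < x2a t - x1a t /\ 0 < x1b t - x2b t /\ 0 < x2c t - x1c t /\ 0 < x1d t - x2d t)
    by (unfold in_int_Csigma; lra).
  apply (cycle_pos (fun s => x2a s - x1a s) (fun s => x1b s - x2b s)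
                   (fun s => x2c s - x1c s) (fun s => x1d s - x2d s)
    (fun s => G_mu34 p (x2a s) (x2b s) (x2c s) (x2d s) - G_mu34 p (x1a s) (x1b s) (x1c s) (x1d s))
    (fun s => G_s p (x1a s) (x1b s) (x1c s) (x1d s) - G_s p (x2a s) (x2b s) (x2c s) (x2d s))
    (fun s => G_mu200 p (x2a s) (x2b s) (x2c s) (x2d s) - G_mu200 p (x1a s) (x1b s) (x1c s) (x1d s))
    (fun s => G_z p (x1a s) (x1b s) (x1c s) (x1d s) - G_z p (x2a s) (x2b s) (x2c s) (x2d s)) L T);
    try apply right_cont_minus; try assumption; try lra.
  - intros s Hs. destruct (D1 s Hs) as (d1a & d1b & d1c & d1d), (D2 s Hs) as (d2a & d2b & d2c & d2d).
    repeat split; apply derivable_pt_lim_minus; assumption.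
  - intros s Hs. apply HL; auto.
Qed.
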